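(* Assume (V1), (V2), (V3), and (In). Then for every $n$, every $i=0,\dots,N_n-2$ and every $t\ge0$, $$t\,y^n_i(t)\,\big[v(y^n_{i+1}(t))-v(y^n_i(t))\big]\le\ell_n.$$
   Context: (V1): $v\in C^1([0,\infty))$ strictly decreasing; (V2): $v(0)=v_{\max}\in\mathbb{R}$; (V3): $\rho\mapsto\rho\,v'(\rho)$ is non-increasing on $[0,\infty)$. $\mathcal{M}_L$: nonnegative compactly supported Radon measures on $\mathbb{R}$ of mass $L>0$. (In): $\bar\rho\in\mathcal{M}_L\cap L^\infty(\mathbb{R})$; $\bar x_{\min}:=\min\mathrm{supp}\,\bar\rho$. For $n\in\mathbb{N}$: $N_n=2^n$, $\ell_n=2^{-n}L$, $\bar x^n_0=\bar x_{\min}$, $\bar x^n_i=\sup\{x:\int_{\bar x^n_{i-1}}^x\bar\rho<\ell_n\}$; $(x^n_i(t))$ solves $\dot x^n_{N_n}=v_{\max}$, $\dot x^n_i=v(\ell_n/(x^n_{i+1}-x^n_i))$, $x^n_i(0)=\bar x^n_i$; $y^n_i(t):=\ell_n/(x^n_{i+1}(t)-x^n_i(t))$, $i=0,\dots,N_n-1$. *)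

From Stdlib Require Import Reals Lra Lia.
Open Scope R_scope.

(* (V1): v is C^1 on [0,oo) (derivative v' taken within [0,oo), so one-sided
   at 0) and strictly decreasing on [0,oo). *)
Definition deriv_within_nonneg (v v' : R -> R) : Prop :=
  forall r, 0 <= r ->
    forall eps, 0 < eps -> exists delta, 0 < delta /\
      forall s, 0 <= s -> s <> r -> Rabs (s - r) < delta ->
        Rabs ((v s - v r) / (s - r) - v' r) < eps.

Definition cont_within_nonneg (f : R -> R) : Prop :=
  forall r, 0 <= r ->
    forall eps, 0 < eps -> exists delta, 0 < delta /\
      forall s, 0 <= s -> Rabs (s - r) < delta -> Rabs (f s - f r) < eps.

Definition V1 (v v' : R -> R) : Prop :=
  deriv_within_nonneg v v' /\ cont_within_nonneg v' /\
  (forall a b, 0 <= a -> a < b -> v b < v a).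

Definition V2 (v : R -> R) (vmax : R) : Prop := v 0 = vmax.

Definition V3 (v' : R -> R) : Prop :=
  forall a b, 0 <= a -> a <= b -> b * v' b <= a * v' a.

(* (In): the initial datum rhobar is encoded by its cumulative distribution
   function F x = int_{-oo}^x rhobar.
   rhobar >= 0           <-> F non-decreasing
   rhobar in L^oo        <-> F Lipschitz
   compact support, mass L <-> F = 0 left of some a, F = L right of some b. *)
Definition In_cdf (F : R -> R) (L : R) : Prop :=
  0 < L /\
  (forall x y, x <= y -> F x <= F y) /\
  (exists M, forall x y, Rabs (F x - F y) <= M * Rabs (x - y)) /\
  (exists a b, a <= b /\ (forall x, x <= a -> F x = 0) /\
                         (forall x, b <= x -> F x = L)).

Definition is_min_supp (F : R -> R) (xmin : R) : Prop :=
  F xmin = 0 /\ forall x, xmin < x -> 0 < F x.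

Definition Nn (n : nat) : nat := (2 ^ n)%nat.
Definition elln (L : R) (n : nat) : R := L / 2 ^ n.

Definition initial_positions (F : R -> R) (L xmin : R) (n : nat)
    (xb : nat -> R) : Prop :=
  xb 0%nat = xmin /\
  forall i, (1 <= i <= Nn n)%nat ->
    is_lub (fun x => F x - F (xb (i - 1)%nat) < elln L n) (xb i).

Definition ydens (L : R) (n : nat) (x : nat -> R -> R) (i : nat) (t : R) : R :=
  elln L n / (x (S i) t - x i t).

(* (x_i)_{i=0..N_n} is a (classical) solution on [0,oo) of the FtL system
   dx_N/dt = vmax, dx_i/dt = v(l_n/(x_{i+1}-x_i)), x_i(0) = xb_i;
   the right-hand side is only defined for ordered particles, so
   x_i(t) < x_{i+1}(t) is part of being a solution. *)
Definition FtL_solution (v : R -> R) (vmax L : R) (n : nat)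
    (xb : nat -> R) (x : nat -> R -> R) : Prop :=
  (forall i, (i <= Nn n)%nat -> x i 0 = xb i) /\
  (forall i, (i < Nn n)%nat -> forall t, 0 <= t -> x i t < x (S i) t) /\
  (forall i, (i <= Nn n)%nat ->
     forall eps, 0 < eps -> exists delta, 0 < delta /\
       forall t, 0 <= t < delta -> Rabs (x i t - x i 0) < eps) /\
  (forall t, 0 < t -> derivable_pt_lim (x (Nn n)) t vmax) /\
  (forall i, (i < Nn n)%nat -> forall t, 0 < t ->
     derivable_pt_lim (x i) t (v (ydens L n x i t))).

(* Let [V_k = v(y_k)] be the velocity of particle [k] (with [V_N = vmax], the
   leader) and [w_j = t y_j (V_{j+1} - V_j)].  Since
   [y_j' = - y_j^2 (V_{j+1} - V_j) / l_n], one finds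
     [l_n w_j' = y_j ((V_{j+1} - V_j)(l_n - w_j) + P_j w_j - P_{j+1} w_{j+1})]
   with [P_k = y_k v'(y_k)] and [P_N = 0].  Where [w_j >= l_n] we have
   [V_{j+1} > V_j], hence [y_{j+1} < y_j], and (V3) together with [v' <= 0]
   gives [P_j <= P_{j+1} <= 0]; if also [w_{j+1} <= l_n], the right-hand side
   is [<= 0].  As [w_j] vanishes at [t = 0], it can then never exceed [l_n],
   and the bound propagates from the leader backwards, [j = N-1, ..., 0]. *)

From Stdlib Require Import Reals Lra Lia.
Open Scope R_scope.

Lemma continuous_le_at_lub (w : R -> R) (l t0 : R) (S : R -> Prop) :
  continuity_pt w t0 -> (forall s, S s -> w s <= l) -> is_lub S t0 -> w t0 <= l.
Proof.
  intros Hc HS [Hub Hlub].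
  destruct (Rle_or_lt (w t0) l) as [Hle | Hgt]; [exact Hle | exfalso].
  destruct (Hc (w t0 - l)) as [alpha [Halpha Hnear]]; [lra |].
  enough (t0 <= t0 - alpha) by lra.
  apply Hlub; intros s Hs.
  pose proof (Hub s Hs); pose proof (HS s Hs).
  destruct (Rle_or_lt s (t0 - alpha)) as [Hfar | Hclose]; [exact Hfar | exfalso].
  destruct (Req_dec s t0) as [-> | Hne]; [lra |].
  assert (Hw : Rabs (w s - w t0) < w t0 - l).
  { apply Hnear; split; [split; [exact I | auto] |].
    simpl; unfold R_dist; rewrite Rabs_left1; lra. }
  apply Rabs_def2 in Hw; lra.
Qed.

Lemma le_of_deriv_nonpos_above (w dw : R -> R) (l : R) :
  (forall t, 0 < t -> derivable_pt_lim w t (dw t)) ->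
  (forall t, 0 < t -> l <= w t -> dw t <= 0) ->
  (exists delta, 0 < delta /\ forall s, 0 < s < delta -> w s < l) ->
  forall t, 0 < t -> w t <= l.
Proof.
  intros Hd Hneg [delta [Hdelta Hsmall]] t1 Ht1.
  destruct (Rle_or_lt (w t1) l) as [Hle | Hgt]; [exact Hle | exfalso].
  set (S := fun s => 0 < s <= t1 /\ w s <= l).
  set (s0 := Rmin (delta / 2) t1).
  assert (Hs0 : 0 < s0) by (apply Rmin_glb_lt; lra).
  assert (HS0 : S s0).
  { assert (s0 <= delta / 2) by apply Rmin_l.
    split; [split; [lra | apply Rmin_r] | left; apply Hsmall; lra]. }
  destruct (completeness S) as [t0 Ht0]; [exists t1; intros s Hs; apply Hs | now exists s0 |].
  assert (Hs0t0 : s0 <= t0) by (apply Ht0; exact HS0).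
  assert (Ht0t1 : t0 <= t1) by (apply Ht0; intros s Hs; apply Hs).
  assert (Hwt0 : w t0 <= l).
  { apply (continuous_le_at_lub w l t0 S); [| intros s Hs; apply Hs | exact Ht0].
    apply derivable_continuous_pt; exists (dw t0); apply Hd; lra. }
  assert (Ht0lt : t0 < t1) by (destruct Ht0t1 as [? | ->]; lra).
  (* on ]t0, t1] the function stays above l, so it cannot increase there *)
  destruct (MVT_cor2 w dw t0 t1) as [c [Hmvt Hc]]; [lra | intros c Hc; apply Hd; lra |].
  assert (Hwc : l <= w c).
  { destruct (Rle_or_lt l (w c)) as [Hle | Hlt]; [exact Hle |].
    enough (c <= t0) by lra. apply Ht0; split; lra. }
  pose proof (Hneg c ltac:(lra) Hwc).
  assert (dw c * (t1 - t0) <= 0) by nra.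
  lra.
Qed.

Lemma lt_near_0_of_le_linear (w : R -> R) (l : R) :
  0 < l ->
  (exists delta C, 0 < delta /\ 0 <= C /\ forall s, 0 < s < delta -> w s <= C * s) ->
  exists delta, 0 < delta /\ forall s, 0 < s < delta -> w s < l.
Proof.
  intros Hl [delta [C [Hdelta [HC Hlin]]]].
  exists (Rmin delta (l / (C + 1))); split.
  { apply Rmin_glb_lt; [lra | apply Rdiv_lt_0_compat; lra]. }
  intros s [Hs Hsd].
  assert (s < delta) by (eapply Rlt_le_trans; [exact Hsd | apply Rmin_l]).
  assert (Hsl : s < l / (C + 1)) by (eapply Rlt_le_trans; [exact Hsd | apply Rmin_r]).
  assert (s * (C + 1) < l) by (apply Rmult_lt_reg_r with (/ (C + 1));
    [apply Rinv_0_lt_compat; lra | rewrite Rmult_assoc, Rinv_r; lra]).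
  specialize (Hlin s ltac:(lra)). nra.
Qed.

Section Velocity.

Variables (v v' : R -> R).
Hypothesis HV1 : V1 v v'.

Lemma velocity_derivable r : 0 < r -> derivable_pt_lim v r (v' r).
Proof.
  intros Hr eps Heps.
  destruct HV1 as [Hd _].
  destruct (Hd r (Rlt_le _ _ Hr) eps Heps) as [d [Hd0 Hd1]].
  assert (Hm : 0 < Rmin d r) by (apply Rmin_glb_lt; lra).
  exists (mkposreal _ Hm); intros h Hh0 Hh; simpl in Hh.
  assert (Hhd : Rabs h < d) by (eapply Rlt_le_trans; [exact Hh | apply Rmin_l]).
  assert (Hhr : Rabs h < r) by (eapply Rlt_le_trans; [exact Hh | apply Rmin_r]).
  replace h with ((r + h) - r) at 2 by ring.
  apply Hd1; [apply Rabs_def2 in Hhr; lra | lra | now replace (r + h - r) with h by ring].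
Qed.

Lemma velocity_nonincreasing a b : 0 <= a -> a <= b -> v b <= v a.
Proof.
  destruct HV1 as [_ [_ Hdec]]; intros Ha [Hab | <-]; [left; auto | lra].
Qed.

Lemma lt_of_velocity_lt a b : 0 <= a -> 0 <= b -> v a < v b -> b < a.
Proof.
  intros Ha Hb Hv; destruct (Rlt_or_le b a) as [Hlt | Hle]; [exact Hlt |].
  pose proof (velocity_nonincreasing a b Ha Hle); lra.
Qed.

Lemma velocity_deriv_nonpos r : 0 <= r -> v' r <= 0.
Proof.
  intros Hr; destruct (Rle_or_lt (v' r) 0) as [Hle | Hpos]; [exact Hle | exfalso].
  destruct HV1 as [Hd [_ Hdec]].
  destruct (Hd r Hr (v' r) Hpos) as [d [Hd0 Hd1]].
  assert (Hq := Hd1 (r + d / 2) ltac:(lra) ltac:(lra)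
                  ltac:(rewrite Rabs_right; lra)).
  assert (v (r + d / 2) < v r) by (apply Hdec; lra).
  assert ((v (r + d / 2) - v r) / (r + d / 2 - r) < 0) by (apply Rdiv_neg_pos; lra).
  apply Rabs_def2 in Hq; lra.
Qed.

End Velocity.

Section FollowTheLeader.

Variables (v v' : R -> R) (vmax L : R) (n : nat) (xb : nat -> R) (x : nat -> R -> R).
Hypotheses (HV1 : V1 v v') (HV2 : V2 v vmax) (HV3 : V3 v') (HL : 0 < L)
  (Hsol : FtL_solution v vmax L n xb x).

Local Notation N := (Nn n).
Local Notation ell := (elln L n).
Local Notation y := (ydens L n x).

Definition vel (k : nat) (t : R) : R := if (k <? N)%nat then v (y k t) else vmax.

(* [rho v'(rho)] evaluated at particle [k]; zero for the leader, whose velocity is constant *)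
Definition rvp (k : nat) (t : R) : R := if (k <? N)%nat then y k t * v' (y k t) else 0.

Definition w (j : nat) (t : R) : R := t * y j t * (vel (S j) t - vel j t).

Definition dw (j : nat) (t : R) : R :=
  y j t * ((vel (S j) t - vel j t) * (ell - w j t)
           + rvp j t * w j t - rvp (S j) t * w (S j) t) / ell.

Lemma ell_pos : 0 < ell.
Proof. apply Rdiv_lt_0_compat; [exact HL | apply pow_lt; lra]. Qed.

Lemma gap_pos k t : (k < N)%nat -> 0 <= t -> x k t < x (S k) t.
Proof. destruct Hsol as [_ [Hord _]]; auto. Qed.

Lemma y_pos k t : (k < N)%nat -> 0 <= t -> 0 < y k t.
Proof.
  intros Hk Ht; pose proof ell_pos; pose proof (gap_pos k t Hk Ht).
  apply Rdiv_lt_0_compat; lra.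
Qed.

Lemma vel_le_vmax k t : 0 <= t -> vel k t <= vmax.
Proof.
  intros Ht; unfold vel; destruct (Nat.ltb_spec k N) as [Hk | _]; [| lra].
  rewrite <- HV2; apply (velocity_nonincreasing v v' HV1); [lra |].
  now apply Rlt_le, y_pos.
Qed.

Lemma rvp_nonpos k t : 0 <= t -> rvp k t <= 0.
Proof.
  intros Ht; unfold rvp; destruct (Nat.ltb_spec k N) as [Hk | _]; [| lra].
  pose proof (y_pos k t Hk Ht).
  pose proof (velocity_deriv_nonpos v v' HV1 (y k t) ltac:(lra)); nra.
Qed.

Lemma rvp_le_next j t : (j < N)%nat -> 0 <= t -> vel j t < vel (S j) t ->
  rvp j t <= rvp (S j) t.
Proof.
  intros Hj Ht Hvel; pose proof (rvp_nonpos j t Ht).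
  unfold vel, rvp in *.
  destruct (Nat.ltb_spec j N); [| lia].
  destruct (Nat.ltb_spec (S j) N) as [HSj | _]; [| lra].
  apply HV3; [now apply Rlt_le, y_pos |].
  apply Rlt_le, (lt_of_velocity_lt v v' HV1); auto; now apply Rlt_le, y_pos.
Qed.

Lemma x_derivable k t : (k <= N)%nat -> 0 < t -> derivable_pt_lim (x k) t (vel k t).
Proof.
  destruct Hsol as [_ [_ [_ [Hlead Hfollow]]]]; intros Hk Ht; unfold vel.
  destruct (Nat.ltb_spec k N); [auto | replace k with N by lia; auto].
Qed.

Lemma y_derivable k t : (k < N)%nat -> 0 < t ->
  derivable_pt_lim (y k) t (- y k t ^ 2 * (vel (S k) t - vel k t) / ell).
Proof.
  intros Hk Ht; pose proof ell_pos; pose proof (gap_pos k t Hk (Rlt_le _ _ Ht)).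
  apply derivable_pt_lim_ext with (f := (fct_cte ell / (x (S k) - x k))%F); [reflexivity |].
  replace (- y k t ^ 2 * (vel (S k) t - vel k t) / ell)
    with ((0 * (x (S k) - x k)%F t - (vel (S k) t - vel k t) * fct_cte ell t)
          / ((x (S k) - x k)%F t)²)
    by (unfold ydens, fct_cte, minus_fct, Rsqr; field; lra).
  apply derivable_pt_lim_div; [apply derivable_pt_lim_const | | unfold minus_fct; lra].
  apply derivable_pt_lim_minus; apply x_derivable; lia || auto.
Qed.

Lemma vel_derivable k t : (k <= N)%nat -> 0 < t ->
  derivable_pt_lim (vel k) t (- rvp k t * y k t * (vel (S k) t - vel k t) / ell).
Proof.
  intros Hk Ht; pose proof ell_pos; unfold rvp.
  destruct (Nat.ltb_spec k N) as [HkN | HkN].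
  - apply derivable_pt_lim_ext with (f := comp v (y k)).
    { intros s; unfold vel, comp; destruct (Nat.ltb_spec k N); [reflexivity | lia]. }
    replace (- (y k t * v' (y k t)) * y k t * (vel (S k) t - vel k t) / ell)
      with (v' (y k t) * (- y k t ^ 2 * (vel (S k) t - vel k t) / ell))
      by (field; lra).
    apply derivable_pt_lim_comp; [now apply y_derivable |].
    apply (velocity_derivable v v' HV1), y_pos; [exact HkN | lra].
  - apply derivable_pt_lim_ext with (f := fct_cte vmax).
    { intros s; unfold vel, fct_cte; destruct (Nat.ltb_spec k N); [lia | reflexivity]. }
    replace (- 0 * y k t * (vel (S k) t - vel k t) / ell) with 0 by (field; lra).
    apply derivable_pt_lim_const.
Qed.

Lemma w_derivable j t : (j < N)%nat -> 0 < t -> derivable_pt_lim (w j) t (dw j t).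
Proof.
  intros Hj Ht; pose proof ell_pos.
  set (dy := - y j t ^ 2 * (vel (S j) t - vel j t) / ell).
  set (dvel k := - rvp k t * y k t * (vel (S k) t - vel k t) / ell).
  apply derivable_pt_lim_ext with (f := (id * y j * (vel (S j) - vel j))%F); [reflexivity |].
  replace (dw j t) with
    ((1 * y j t + t * dy) * (vel (S j) t - vel j t) + t * y j t * (dvel (S j) - dvel j))
    by (unfold dw, w, dy, dvel; field; lra).
  apply (derivable_pt_lim_mult (id * y j)%F (vel (S j) - vel j)%F t (1 * y j t + t * dy)).
  - apply (derivable_pt_lim_mult id); [apply derivable_pt_lim_id | now apply y_derivable].
  - apply derivable_pt_lim_minus; apply vel_derivable; lia || auto.
Qed.

Lemma dw_nonpos_above j t : (j < N)%nat -> 0 < t ->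
  ((S j < N)%nat -> w (S j) t <= ell) -> ell <= w j t -> dw j t <= 0.
Proof.
  intros Hj Ht Hnext Habove.
  pose proof ell_pos as Hell; pose proof (y_pos j t Hj (Rlt_le _ _ Ht)).
  assert (Hvel : vel j t < vel (S j) t).
  { unfold w in Habove; assert (0 < t * y j t) by nra; nra. }
  pose proof (rvp_le_next j t Hj (Rlt_le _ _ Ht) Hvel).
  pose proof (rvp_nonpos (S j) t (Rlt_le _ _ Ht)).
  assert (Hfollower : rvp (S j) t * ell <= rvp (S j) t * w (S j) t).
  { destruct (Nat.ltb_spec (S j) N) as [HSj | HSj]; [specialize (Hnext HSj); nra |].
    unfold rvp; destruct (Nat.ltb_spec (S j) N); [lia | lra]. }
  assert (Hbracket : (vel (S j) t - vel j t) * (ell - w j t)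
                     + rvp j t * w j t - rvp (S j) t * w (S j) t <= 0) by nra.
  unfold dw; apply Rmult_le_reg_r with ell; [exact Hell |].
  unfold Rdiv; rewrite Rmult_assoc, Rinv_l, Rmult_0_l, Rmult_1_r; [nra | lra].
Qed.

Lemma y_bounded_near_0 j : (j < N)%nat ->
  exists delta A, 0 < delta /\ forall s, 0 <= s < delta -> y j s <= A.
Proof.
  intros Hj; pose proof ell_pos.
  destruct Hsol as [_ [_ [Hcont _]]].
  set (G0 := x (S j) 0 - x j 0).
  assert (HG0 : 0 < G0) by (pose proof (gap_pos j 0 Hj (Rle_refl 0)); unfold G0; lra).
  destruct (Hcont j ltac:(lia) (G0 / 4) ltac:(lra)) as [d1 [Hd1 Hc1]].
  destruct (Hcont (S j) ltac:(lia) (G0 / 4) ltac:(lra)) as [d2 [Hd2 Hc2]].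
  exists (Rmin d1 d2), (ell / (G0 / 2)); split; [now apply Rmin_glb_lt |].
  intros s [Hs Hsd].
  assert (s < d1) by (eapply Rlt_le_trans; [exact Hsd | apply Rmin_l]).
  assert (s < d2) by (eapply Rlt_le_trans; [exact Hsd | apply Rmin_r]).
  specialize (Hc1 s ltac:(lra)); specialize (Hc2 s ltac:(lra)).
  apply Rabs_def2 in Hc1; apply Rabs_def2 in Hc2.
  unfold ydens, Rdiv; apply Rmult_le_compat_l; [lra |].
  apply Rinv_le_contravar; unfold G0 in *; lra.
Qed.

Lemma w_lt_ell_near_0 j : (j < N)%nat ->
  exists delta, 0 < delta /\ forall s, 0 < s < delta -> w j s < ell.
Proof.
  intros Hj; apply lt_near_0_of_le_linear; [exact ell_pos |].
  destruct (y_bounded_near_0 j Hj) as [delta [A [Hdelta Hbound]]].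
  assert (HA : 0 <= A) by (pose proof (y_pos j 0 Hj (Rle_refl 0));
                           pose proof (Hbound 0 ltac:(lra)); lra).
  assert (HK : v A <= vmax)
    by (rewrite <- HV2; exact (velocity_nonincreasing v v' HV1 0 A (Rle_refl 0) HA)).
  exists delta, (A * (vmax - v A)); split; [exact Hdelta | split; [nra |]].
  intros s Hs; specialize (Hbound s ltac:(lra)).
  pose proof (y_pos j s Hj ltac:(lra)).
  assert (vel j s = v (y j s)) by (unfold vel; destruct (Nat.ltb_spec j N); [reflexivity | lia]).
  pose proof (vel_le_vmax (S j) s ltac:(lra)).
  pose proof (velocity_nonincreasing v v' HV1 (y j s) A ltac:(lra) Hbound).
  unfold w; destruct (Rle_or_lt (vel (S j) s) (vel j s)).
  - assert (0 < s * y j s) by nra.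
    assert (0 <= A * (vmax - v A) * s) by (apply Rmult_le_pos; nra). nra.
  - assert (0 <= s * y j s <= s * A) by nra. nra.
Qed.

Lemma w_le_ell_from_next j : (j < N)%nat ->
  ((S j < N)%nat -> forall t, 0 <= t -> w (S j) t <= ell) ->
  forall t, 0 <= t -> w j t <= ell.
Proof.
  intros Hj Hnext t [Ht | <-].
  - apply (le_of_deriv_nonpos_above (w j) (dw j)); auto.
    + intros s Hs; now apply w_derivable.
    + intros s Hs; apply dw_nonpos_above; auto; intros HSj; apply Hnext; [exact HSj | lra].
    + now apply w_lt_ell_near_0.
  - unfold w; rewrite !Rmult_0_l; left; exact ell_pos.
Qed.

Lemma w_le_ell j t : (j < N)%nat -> 0 <= t -> w j t <= ell.
Proof.
  intros Hj; revert t.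
  remember (N - S j)%nat as k eqn:Hk; revert j Hj Hk.
  induction k as [| k IHk]; intros j Hj Hk; apply w_le_ell_from_next; auto.
  - intros HSj; lia.
  - intros HSj; apply IHk; lia.
Qed.

End FollowTheLeader.

Theorem lemma3p9 (v v' : R -> R) (vmax L : R) (F : R -> R) (xmin : R)
  (HV1 : V1 v v') (HV2 : V2 v vmax) (HV3 : V3 v')
  (HIn : In_cdf F L) (Hxmin : is_min_supp F xmin) :
  forall (n : nat) (xb : nat -> R) (x : nat -> R -> R),
    initial_positions F L xmin n xb ->
    FtL_solution v vmax L n xb x ->
    forall (i : nat), (i + 2 <= Nn n)%nat ->
    forall t, 0 <= t ->
      t * ydens L n x i t * (v (ydens L n x (S i) t) - v (ydens L n x i t))
        <= elln L n.
Proof.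
  (* only [L > 0] is used from the initial datum: the bound holds for every
     solution of the particle system *)
  intros n xb x _ Hsol i Hi t Ht.
  pose proof (w_le_ell v v' vmax L n xb x HV1 HV2 HV3 (proj1 HIn) Hsol i t
                ltac:(lia) Ht) as Hw.
  unfold w, vel in Hw.
  destruct (Nat.ltb_spec (S i) (Nn n)), (Nat.ltb_spec i (Nn n)); [exact Hw | lia ..].
Qed.
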